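(* Let $2\le N\le L-1$, let $x>0$, and let $r_1,\dots,r_{L-N},\ell_1,\dots,\ell_{L-N}$ be real parameters. Define $r,\ell:\{0,1,\dots,L-N\}^2\to\mathbb{R}$ (on pairs $(k,n)$ with $k+n\le L-N$) by $r(0,n)=\ell(0,n)=0$ for $n\ge 0$; $r(k,0)=r_k$, $\ell(k,0)=\ell_k$ for $k\ge 1$; $r(1,n)=x\,r_{n+1}$, $\ell(1,n)=x\,\ell_{n+1}$ for $n\ge1$; and for $k\ge 2$, $n\ge 1$, $$r(k,n)=x\,r_{n+k}+\sum_{j=n+1}^{n+k-1} r_j-\sum_{j=1}^{k-1} r_j,\qquad \ell(k,n)=x\,\ell_{n+k}+\sum_{j=n+1}^{n+k-1} \ell_j-\sum_{j=1}^{k-1} \ell_j .$$ Assume all these values are nonnegative. Consider the exclusion process on $\Omega_{L,N}$ in which, independently, particle $i$ jumps one site to the right at rate $r(h_i,h_{i-1})$ and one site to the left at rate $\ell(h_{i-1},h_i)$. Then the probability measure $$\hat\pi(\boldsymbol\eta)=\frac{1}{Z}\,x^{\sum_{j\in\mathbb{T}_L}\eta_j\eta_{j+1}},\qquad \boldsymbol\eta\in\Omega_{L,N},$$ with $Z$ the normalizing constant, is an invariant (stationary) measure of this process.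
   Context: $\mathbb{T}_L=\mathbb{Z}/L\mathbb{Z}$ is the ring with $L$ sites. $\Omega_{L,N}$ is the set of configurations $\boldsymbol\eta=(\eta_j)_{j\in\mathbb{T}_L}\in\{0,1\}^{\mathbb{T}_L}$ with $\sum_j\eta_j=N$ ($\eta_j=1$ means site $j$ is occupied by a particle). Particles are labeled $1,\dots,N$ in cyclic (increasing) order, with positions $p_1,\dots,p_N$, labels taken mod $N$. The headway $h_i$ is the number of empty sites between particle $i$ and particle $i+1$ (so $h_i\ge0$ and $\sum_i h_i=L-N$); $h_{i-1}$ is the number of empty sites between particle $i-1$ and particle $i$. A right jump of particle $i$ moves it from $p_i$ to $p_i+1$ (possible only if $h_i\ge1$), a left jump moves it to $p_i-1$ (possible only if $h_{i-1}\ge1$); the process is the continuous-time Markov chain with these jumps. Note $\sum_j\eta_j\eta_{j+1}=\#\{i: h_i=0\}$. *)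

From mathcomp Require Import all_boot all_order all_algebra.
Set Implicit Arguments. Unset Strict Implicit. Unset Printing Implicit Defensive.
Import Order.TTheory GRing.Theory Num.Theory.
Local Open Scope ring_scope.

(* Configurations: eta : {ffun 'I_L -> bool}, eta j = true iff site j occupied. *)
Definition config (L : nat) := {ffun 'I_L -> bool}.

Definition npart L (eta : config L) : nat := (\sum_(j < L) (eta j : nat))%N.

Definition Omega L N : {set config L} := [set eta | npart eta == N].

Definition shiftR L (j : 'I_L) (m : nat) : 'I_L := iter m (@ordS L) j.
Definition shiftL L (j : 'I_L) (m : nat) : 'I_L := iter m (@ord_pred L) j.

(* headway to the right of site p: number of consecutive empty sites p+1, p+2, ... *)
Definition hR L (eta : config L) (p : 'I_L) : nat :=
  (\sum_(1 <= k < L) [forall m : 'I_k, ~~ eta (shiftR p m.+1)] : nat)%N.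
Definition hL L (eta : config L) (p : 'I_L) : nat :=
  (\sum_(1 <= k < L) [forall m : 'I_k, ~~ eta (shiftL p m.+1)] : nat)%N.

Definition nn L (eta : config L) : nat :=
  (\sum_(j < L) (eta j && eta (shiftR j 1)) : nat)%N.

Definition ratefun {R : nzRingType} (x : R) (rr : nat -> R) (k n : nat) : R :=
  if k == 0%N then 0
  else if n == 0%N then rr k
  else if k == 1%N then x * rr (n + 1)%N
  else x * rr (n + k)%N + \sum_(n.+1 <= j < n + k) rr j - \sum_(1 <= j < k) rr j.

Definition moveR L (eta : config L) (p : 'I_L) : config L :=
  [ffun i => if i == p then false else if i == shiftR p 1 then true else eta i].
Definition moveL L (eta : config L) (p : 'I_L) : config L :=
  [ffun i => if i == p then false else if i == shiftL p 1 then true else eta i].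

(* transition rate from eta to eta': particle at p jumps right at rate
   r(h_i, h_{i-1}) = r(hR p, hL p), left at rate l(h_{i-1}, h_i) = l(hL p, hR p). *)
Definition Qrate {R : nzRingType} L (x : R) (rr ll : nat -> R) (eta eta' : config L) : R :=
  \sum_(p < L)
    ( ((eta p && ~~ eta (shiftR p 1)) && (eta' == moveR eta p))%:R
        * ratefun x rr (hR eta p) (hL eta p)
    + ((eta p && ~~ eta (shiftL p 1)) && (eta' == moveL eta p))%:R
        * ratefun x ll (hL eta p) (hR eta p) ).

Definition Zconst {R : fieldType} (L : nat) (N : nat) (x : R) : R :=
  \sum_(eta in Omega L N) x ^+ nn eta.
Definition pihat {R : fieldType} (L N : nat) (x : R) (eta : config L) : R :=
  x ^+ nn eta / Zconst L N x.

Definition ep_invariant {R : nzRingType} L N (mu : config L -> R)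
    (Q : config L -> config L -> R) : Prop :=
  forall eta' : config L, eta' \in Omega L N ->
    \sum_(eta in Omega L N) mu eta * Q eta eta'
    = mu eta' * \sum_(eta in Omega L N) Q eta' eta.

Arguments Zconst {R} L N x.
Arguments pihat {R} L N x eta.
Arguments Qrate {R} L x rr ll eta eta'.
Arguments ep_invariant {R} L N mu Q.

From mathcomp Require Import all_boot all_order all_algebra.
From mathcomp Require Import zify ring.
Set Implicit Arguments. Unset Strict Implicit. Unset Printing Implicit Defensive.
Import Order.TTheory GRing.Theory Num.Theory.

(* Global balance is checked separately for the jumps in each direction, and
   inside one direction particle by particle.  A particle q with gap a behind
   it and gap b ahead of it (a > 0) was reached from the configuration where
   it sat one site back, with gaps a - 1 behind and b + 1 ahead; that move
   changes the number of occupied neighbour pairs by [a = 1] - [b = 0].  The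
   recursion defining r is exactly what gives
     x^[a = 1] r(b + 1, a - 1) = x^[b = 0] (r(b, a) + r_a - r_b)   (r_0 = 0),
   so the weighted inflow into a configuration is x^(nn) times its outflow
   plus x^(nn) times the sum over particles of r_a - r_b.  This last sum
   vanishes because the gap behind a particle is the gap ahead of the
   previous particle. *)

Lemma sum_nat_patch (T : finType) (f g : T -> nat) (r : seq T) : uniq r ->
  {in [predC r], f =1 g} ->
  \sum_i f i + \sum_(i <- r) g i = \sum_i g i + \sum_(i <- r) f i.
Proof.
move=> r_uniq fg; rewrite !(big_uniq _ r_uniq) /=.
rewrite [\sum_i f i](bigID (mem r)) [\sum_i g i](bigID (mem r)) /=.
rewrite [\sum_(i | i \notin r) f i](eq_bigr g) => [|i ir]; last by apply: fg; rewrite inE.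
set fr := \sum_(i in r) f i; set gr := \sum_(i in r) g i.
set gn := \sum_(i | i \notin r) g i; lia.
Qed.

Lemma iter_addK L (s t : 'I_L -> 'I_L) : cancel s t ->
  forall m k p, iter m t (iter (m + k) s p) = iter k s p.
Proof. by move=> sK; elim=> [|m IHm] k p //; rewrite iterSr addSn iterS sK IHm. Qed.

(* [s] steps one site around the ring and [t] steps back, so one argument
   covers right jumps (s = ordS) and left jumps (s = ord_pred).  By conversion,
   [hR], [hL], [moveR], [moveL] and [nn] are [headway ordS], [headway ord_pred],
   [jump ordS], [jump ord_pred] and [neighbours ordS]. *)
Definition orientation L (s t : 'I_L -> 'I_L) :=
  [/\ cancel s t, cancel t s, forall p, iter L s p = p,
      forall p m, 0 < m < L -> iter m s p != p
    & forall p j, exists2 m, m < L & iter m s p = j].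

Definition headway L (s : 'I_L -> 'I_L) (e : config L) (p : 'I_L) : nat :=
  \sum_(1 <= k < L) ([forall m : 'I_k, ~~ e (iter m.+1 s p)] : nat).

Definition next_particle L (s : 'I_L -> 'I_L) (e : config L) (p : 'I_L) : 'I_L :=
  iter (headway s e p).+1 s p.

Definition jump L (s : 'I_L -> 'I_L) (e : config L) (p : 'I_L) : config L :=
  [ffun i => if i == p then false else if i == s p then true else e i].

Definition neighbours L (s : 'I_L -> 'I_L) (e : config L) : nat :=
  \sum_(j < L) (e j && e (s j) : nat).

Lemma jump_other L (s : 'I_L -> 'I_L) (e : config L) q i :
  i != q -> i != s q -> jump s e q i = e i.
Proof. by move=> /negbTE iq /negbTE isq; rewrite ffunE iq isq. Qed.

Lemma npart_jump L (s : 'I_L -> 'I_L) (e : config L) q :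
  e q -> ~~ e (s q) -> npart (jump s e q) = npart e.
Proof.
move=> e_q e_sq; have sq_q : (s q == q) = false by apply: contraNF e_sq => /eqP ->.
have r_uniq : uniq [:: q; s q] by rewrite /= inE eq_sym sq_q.
have same i : i \in [predC [:: q; s q]] -> (jump s e q i : nat) = e i.
  by rewrite !inE negb_or => /andP [i_q i_sq]; rewrite jump_other.
have := sum_nat_patch r_uniq same; rewrite !big_cons !big_nil !ffunE eqxx sq_q eqxx.
rewrite e_q (negbTE e_sq) /npart /=; lia.
Qed.

Lemma other_particle L (e : config L) q :
  1 < npart e -> e q -> exists2 j, e j & j != q.
Proof.
move=> npart_gt1 e_q.
case: (pickP [pred j | e j && (j != q)]) => [j /andP [e_j jq]|alone]; first by exists j.
move: npart_gt1; rewrite /npart (bigD1 q) //= e_q big1 // => j jq.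
by have := alone j; rewrite /= jq andbT => ->.
Qed.

Section Orientation.

Variables (L : nat) (s t : 'I_L -> 'I_L).
Hypothesis D : orientation s t.

Lemma orientation_sym : orientation t s.
Proof.
have [sK tK cyc iter_neq onto] := D; split=> // [p|p m m_bd|p j].
- by have := iter_addK tK L 0 p; rewrite addn0 cyc.
- apply/eqP => mtp.
  have := iter_addK tK m 0 p; rewrite addn0 /= mtp => pE.
  by have := iter_neq p m m_bd; rewrite pE eqxx.
- have [m m_lt pE] := onto j p; exists m => //.
  by rewrite -pE; have := iter_addK sK m 0 j; rewrite addn0.
Qed.

Lemma iter_inj p m n : m < L -> n < L -> iter m s p = iter n s p -> m = n.
Proof.
have [_ _ _ iter_neq _] := D.
wlog le_mn : m n / m <= n => [W m_lt n_lt E|m_lt n_lt E].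
  by case: (leqP m n) => [mn|/ltnW nm]; [exact: W | symmetry; exact: W].
case: (ltngtP m n) le_mn => // lt_mn _.
have := iter_neq (iter m s p) (n - m).
rewrite -iterD subnK ?(ltnW lt_mn) // -E eqxx subn_gt0 lt_mn.
by rewrite (leq_ltn_trans (leq_subr _ _) n_lt) => /(_ isT).
Qed.

Lemma eq_iter p m n : m < L -> n < L -> (iter m s p == iter n s p) = (m == n).
Proof. by move=> m_lt n_lt; apply/eqP/eqP => [|-> //]; exact: iter_inj. Qed.

Lemma iter_eq_self p m : m < L -> (iter m s p == p) = (m == 0).
Proof. by move=> m_lt; exact: (eq_iter p m_lt (leq_ltn_trans (leq0n m) m_lt)). Qed.

Lemma iter_eq_succ p m : 1 < L -> m < L -> (iter m s p == s p) = (m == 1).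
Proof. by move=> L_gt1 m_lt; exact: (eq_iter p m_lt L_gt1). Qed.

Lemma iter_pred p : t p = iter L.-1 s p.
Proof.
have [sK _ cyc _ _] := D; have L_gt0 : 0 < L := leq_ltn_trans (leq0n p) (ltn_ord p).
have iterL : iter L s p = s (iter L.-1 s p) by rewrite -iterS prednK.
by rewrite -{1}(cyc p) iterL sK.
Qed.

Lemma headway_spec (e : config L) p h : h < L ->
  (forall m, 0 < m <= h -> ~~ e (iter m s p)) -> e (iter h.+1 s p) ->
  headway s e p = h.
Proof.
move=> h_lt empty occ; rewrite /headway.
rewrite (eq_big_nat _ _ (F2 := fun k => (k <= h : nat))); last first.
  move=> k /andP [k_gt0 _]; congr nat_of_bool; case: (leqP k h) => kh.
    by apply/forallP => m; apply: empty; rewrite /= (leq_trans (ltn_ord m)).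
  by apply/forallP => /(_ (Ordinal kh)) /=; rewrite occ.
rewrite (big_cat_nat _ (n := h.+1)) //= [X in (_ + X)%N]big_nat_cond.
rewrite [X in (_ + X)%N]big1 => [|i /andP [/andP [hi _] _]]; last first.
  by rewrite leqNgt hi.
rewrite addn0 (eq_big_nat _ _ (F2 := fun _ => 1%N)) => [|i /andP [_ hi]]; last first.
  by rewrite -ltnS hi.
by rewrite sum_nat_const_nat subn1 muln1.
Qed.

Lemma headwayP (e : config L) p : e p ->
  [/\ headway s e p < L, forall m, 0 < m <= headway s e p -> ~~ e (iter m s p)
    & e (next_particle s e p)].
Proof.
have [_ _ cyc _ _] := D; move=> ep.
have L_gt0 : 0 < L := leq_ltn_trans (leq0n p) (ltn_ord p).
have ex_occ : exists n, e (iter n.+1 s p) by exists L.-1; rewrite prednK // cyc.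
case: (ex_minnP ex_occ) => h occ h_min.
have h_lt : h < L by rewrite -(prednK L_gt0) ltnS h_min // prednK // cyc.
have empty m : 0 < m <= h -> ~~ e (iter m s p).
  case: m => // m /andP [_ mh]; apply: contraTN mh => /h_min.
  by rewrite -ltnNge ltnS.
by rewrite /next_particle (headway_spec h_lt empty occ).
Qed.

Lemma headway_ltn (e : config L) p j : e p -> e j -> j != p -> headway s e p < L.-1.
Proof.
have [_ _ _ _ onto] := D; move=> ep ej jp; have [h_lt empty _] := headwayP ep.
have [m m_lt pj] := onto p j.
have m_gt0 : 0 < m by case: m pj {m_lt} => // pj; rewrite -pj eqxx in jp.
rewrite ltnNge; apply: contraTN ej => h_ge; rewrite -pj empty // m_gt0.
by rewrite (leq_trans _ h_ge) // -ltnS prednK // (leq_ltn_trans _ m_lt).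
Qed.

Lemma headway_eq0 (e : config L) p : e p -> (headway s e p == 0) = e (s p).
Proof.
move=> ep; have [h_lt _ occ] := headwayP ep.
apply/eqP/idP => [h0|esp]; first by rewrite /next_particle h0 in occ.
by apply: headway_spec => // [|[]//]; apply: leq_ltn_trans h_lt.
Qed.

Lemma headway_eq1 (e : config L) p : e p -> ~~ e (s p) ->
  (headway s e p == 1) = e (s (s p)).
Proof.
move=> ep /negbTE esp; have [_ empty occ] := headwayP ep.
apply/eqP/idP => [h1|essp]; first by rewrite /next_particle h1 in occ.
have := headway_eq0 ep; rewrite esp; case: (headway s e p) empty => // -[//|h] empty _.
by have := empty 2; rewrite essp => /(_ isT).
Qed.

Lemma neighbours_sym (e : config L) : neighbours t e = neighbours s e.
Proof.
have [sK _ _ _ _] := D.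
rewrite /neighbours (reindex_inj (can_inj sK)) /=.
by apply: eq_bigr => j _; rewrite sK andbC.
Qed.

Lemma jump_equiv (e e' : config L) p :
  ((e p && ~~ e (s p)) && (e' == jump s e p)) =
  ((e' (s p) && ~~ e' p) && (e == jump t e' (s p))).
Proof.
have [sK _ _ _ _] := D.
apply/idP/idP => [/andP [/andP [ep esp] /eqP ->]|/andP [/andP [esp ep] /eqP ->]].
- have sp_p : s p != p by apply: contraNneq esp => ->.
  rewrite !ffunE eqxx (negbTE sp_p) eqxx /=.
  apply/eqP/ffunP => i; rewrite !ffunE sK.
  case: (eqVneq i (s p)) => [->|_]; first by rewrite (negbTE esp).
  by case: (eqVneq i p) => [->|].
- have p_sp : p != s p by apply: contraNneq ep => ->.
  rewrite !ffunE eqxx sK (negbTE p_sp) eqxx /=.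
  apply/eqP/ffunP => i; rewrite !ffunE sK.
  case: (eqVneq i p) => [->|_]; first by rewrite (negbTE ep).
  by case: (eqVneq i (s p)) => [->|].
Qed.

End Orientation.

Lemma next_particleP L (s t : 'I_L -> 'I_L) (D : orientation s t) (e : config L) q :
  e q ->
  [/\ e (next_particle s e q), headway t e (next_particle s e q) = headway s e q
    & next_particle t e (next_particle s e q) = q].
Proof.
have [sK _ _ _ _] := D; move=> e_q; have [h_lt empty occ] := headwayP D e_q.
have back : iter (headway s e q).+1 t (next_particle s e q) = q.
  by have := iter_addK sK (headway s e q).+1 0 q; rewrite addn0.
have ht : headway t e (next_particle s e q) = headway s e q.
  apply: headway_spec => //; last by rewrite back.
  move=> m /andP [m_gt0 m_le]; rewrite /next_particle.
  rewrite -(subnKC (leq_trans m_le (leqnSn _))) iter_addK //.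
  by apply: empty; rewrite subn_gt0 ltnS m_le leq_subLR -add1n leq_add2r.
by split=> //; rewrite [next_particle t _ _]/next_particle ht.
Qed.

Lemma sum_headway_sym L (s t : 'I_L -> 'I_L) (D : orientation s t)
    (R : nmodType) (e : config L) (G : nat -> R) :
  (\sum_(q | e q) G (headway t e q) = \sum_(q | e q) G (headway s e q))%R.
Proof.
have D' := orientation_sym D.
rewrite (reindex_onto (next_particle s e) (next_particle t e)) => [|q e_q]; last first.
  by have [_ _ ->] := next_particleP D' e_q.
apply: eq_big => [q|q /andP [e_nq /eqP nnq]].
  apply/andP/idP => [[e_nq /eqP <-]|e_q]; first by have [] := next_particleP D' e_nq.
  by have [-> _ ->] := next_particleP D e_q.
have e_q : e q by rewrite -nnq; have [] := next_particleP D' e_nq.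
by have [_ -> _] := next_particleP D e_q.
Qed.

Section Jumps.

Variables (L : nat) (s t : 'I_L -> 'I_L).
Hypothesis D : orientation s t.
Let D' := orientation_sym D.
Variables (e : config L) (q : 'I_L).
Hypotheses (e_q : e q) (e_sq : ~~ e (s q)).

Lemma headway_jump_ahead j : e j -> j != q ->
  headway s (jump s e q) (s q) = (headway s e q).-1.
Proof.
move=> e_j jq; have [_ empty occ] := headwayP D e_q.
have h_lt := headway_ltn D e_q e_j jq.
have h_gt0 : 0 < headway s e q by rewrite lt0n (headway_eq0 D e_q).
have L_gt1 : 1 < L by lia.
apply: headway_spec => [|m /andP [m_gt0 m_le]|]; first lia.
  rewrite -iterSr ffunE (iter_eq_self D) ?(iter_eq_succ D) //; try lia.
  by case: m m_gt0 m_le => // m _ m_le; rewrite (negbTE (empty _ _)) //; lia.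
rewrite -iterSr prednK // ffunE (iter_eq_self D) ?(iter_eq_succ D) //; try lia.
move: h_gt0 occ; rewrite /next_particle.
by case: (headway s e q) => // h _ ->; case: ifP.
Qed.

Lemma headway_jump_behind j : e j -> j != q ->
  headway t (jump s e q) (s q) = (headway t e q).+1.
Proof.
have [sK _ _ _ _] := D.
move=> e_j jq; have [_ empty occ] := headwayP D' e_q.
have h_lt := headway_ltn D' e_q e_j jq.
have iter_t_sq m : iter m.+1 t (s q) = iter m t q by rewrite iterSr sK.
apply: headway_spec => [|[//|m] /andP [_ m_le]|]; first lia.
  rewrite iter_t_sq ffunE; case: m m_le => [|m] m_le; first by rewrite eqxx.
  rewrite (iter_eq_self D') ?(iter_pred D' q) ?(eq_iter D') //; try lia.
  have -> : (m.+1 == L.-1) = false by apply/eqP; lia.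
  by rewrite (negbTE (empty _ _)) //; lia.
rewrite iter_t_sq ffunE (iter_eq_self D'); last lia.
rewrite -[_.+1 == 0]/false; case: eqP => [E|_ //].
by move: e_sq; rewrite -E occ.
Qed.

Lemma neighbours_jump : 2 < L ->
  neighbours s (jump s e q) + (headway t e q == 0) =
  neighbours s e + (headway s e q == 1).
Proof.
have [sK tK _ _ _] := D; move=> L_gt2.
rewrite (headway_eq0 D' e_q) (headway_eq1 D e_q e_sq).
have sq_q : (s q == q) = false by apply: contraNF e_sq => /eqP ->; exact: e_q.
have tq_q : (t q == q) = false by apply: contraFF sq_q => /eqP tq; rewrite -{1}tq tK.
have sq_tq : (s q == t q) = false.
  rewrite (iter_pred D) (eq_iter D q (_ : 1 < L)); lia.
have ssq_q : (s (s q) == q) = false.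
  by apply: contraFF sq_tq => /eqP ssq; rewrite -{2}ssq sK.
have ssq_sq : (s (s q) == s q) = false by rewrite (can_eq sK).
pose r := [:: t q; q; s q].
have r_uniq : uniq r.
  by rewrite /= !inE tq_q [t q == _]eq_sym sq_tq [q == _]eq_sym sq_q.
have same i : i \in [predC r] ->
    (jump s e q i && jump s e q (s i) : nat) = (e i && e (s i) : nat).
  rewrite !inE !negb_or => /and3P [i_tq i_q i_sq].
  have si_q : s i != q by apply: contra i_tq => /eqP <-; rewrite sK.
  have si_sq : s i != s q by rewrite (can_eq sK).
  by rewrite !jump_other.
have := sum_nat_patch r_uniq same; rewrite !big_cons !big_nil /neighbours.
rewrite !ffunE tK eqxx tq_q sq_q ssq_q ssq_sq eqxx (negbTE e_sq) e_q /= !andbF andbT.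
lia.
Qed.

End Jumps.

Local Open Scope ring_scope.

Lemma sum_indicator_eq (R : nzSemiRingType) (T : finType) (S : {pred T}) (m : T)
    (c : bool) (F : T -> R) :
  (c -> m \in S) -> \sum_(i in S) (c && (i == m))%:R * F i = c%:R * F m.
Proof.
case: c => [/(_ isT) mS|_]; last by rewrite mul0r big1 // => i _; rewrite mul0r.
rewrite (bigD1 m) //= eqxx mul1r big1 ?addr0 // => i /andP [_ /negbTE ->].
by rewrite mul0r.
Qed.

Lemma ratefun_jump (R : comNzRingType) (x : R) (rr : nat -> R) a b : (0 < a)%N ->
  x ^+ (a == 1)%N * ratefun x rr b.+1 a.-1 =
  x ^+ (b == 0)%N * (ratefun x rr b a + ratefun x rr a 0 - ratefun x rr b 0).
Proof.
case: a => // -[|a] _; case: b => [|[|b]]; rewrite /ratefun /= ?expr1 ?expr0.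
- by rewrite subr0 add0r.
- by rewrite mul1r addrK.
- rewrite add1n big_nat_recr //= [\sum_(1 <= j < b.+2) _]big_ltn //= mul1r.
  set S := \sum_(2 <= j < b.+2) rr j; ring.
- by rewrite addn1 subr0 add0r mul1r mulrC.
- by rewrite addn2 big_nat1 big_nat1 addn1; ring.
- rewrite big_ltn; last lia.
  rewrite [\sum_(1 <= j < b.+3) _]big_nat_recr //=.
  have -> : (a.+1 + b.+3 = a.+2 + b.+2)%N by lia.
  set S := \sum_(a.+3 <= j < a.+2 + b.+2) rr j.
  set T := \sum_(1 <= j < b.+2) rr j; ring.
Qed.

Definition jump_rate {R : nzRingType} L (s t : 'I_L -> 'I_L) (x : R) (rr : nat -> R)
    (e e' : config L) : R :=
  \sum_(p < L) ((e p && ~~ e (s p)) && (e' == jump s e p))%:R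
                 * ratefun x rr (headway s e p) (headway t e p).

Section Balance.

Variables (R : fieldType) (L : nat) (s t : 'I_L -> 'I_L).
Hypothesis D : orientation s t.
Let D' := orientation_sym D.
Variables (x : R) (rr : nat -> R).
Hypothesis x_neq0 : x != 0.

Lemma inflow_term (e : config L) q : (2 < L)%N -> (exists2 j, e j & j != q) -> e q ->
  (~~ e (t q))%:R * (x ^+ neighbours s (jump t e q)
     * ratefun x rr (headway s (jump t e q) (t q)) (headway t (jump t e q) (t q)))
  = x ^+ neighbours s e * (ratefun x rr (headway s e q) (headway t e q)
     + ratefun x rr (headway t e q) 0 - ratefun x rr (headway s e q) 0).
Proof.
move=> L_gt2 [j e_j jq] e_q; have [e_tq|e_tq] := boolP (e (t q)).
  have /eqP -> : headway t e q == 0%N by rewrite (headway_eq0 D').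
  by rewrite mul0r [ratefun x rr 0 0]/ratefun /= addr0 subrr mulr0.
have a_gt0 : (0 < headway t e q)%N by rewrite lt0n (headway_eq0 D' e_q).
(* With the roles of [s] and [t] exchanged, [jump t e q] is a forward jump. *)
rewrite mul1r (headway_jump_ahead D' e_q e_tq e_j jq).
rewrite (headway_jump_behind D' e_q e_tq e_j jq).
have nn := neighbours_jump D' e_q e_tq L_gt2; rewrite -!(neighbours_sym D') in nn.
apply: (mulIf (expf_neq0 (headway s e q == 0)%N x_neq0)).
rewrite mulrAC -exprD nn exprD -mulrA ratefun_jump //.
by rewrite mulrA [RHS]mulrAC.
Qed.

Lemma outflow_term (e : config L) q :
  (e q && ~~ e (s q))%:R * ratefun x rr (headway s e q) (headway t e q)
  = (e q)%:R * ratefun x rr (headway s e q) (headway t e q).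
Proof.
case e_q: (e q) => //=; case e_sq: (e (s q)) => //=.
have /eqP -> : headway s e q == 0%N by rewrite (headway_eq0 D).
by rewrite /ratefun eqxx !mulr0.
Qed.

Lemma inflow_eq_outflow (e : config L) : (2 < L)%N -> (1 < npart e)%N ->
  \sum_q (e q && ~~ e (t q))%:R * (x ^+ neighbours s (jump t e q)
     * ratefun x rr (headway s (jump t e q) (t q)) (headway t (jump t e q) (t q)))
  = x ^+ neighbours s e
    * \sum_q (e q && ~~ e (s q))%:R * ratefun x rr (headway s e q) (headway t e q).
Proof.
move=> L_gt2 npart_gt1.
transitivity (x ^+ neighbours s e * \sum_(q | e q)
  (ratefun x rr (headway s e q) (headway t e q)
   + ratefun x rr (headway t e q) 0 - ratefun x rr (headway s e q) 0)).
  rewrite mulr_sumr [RHS]big_mkcond; apply: eq_bigr => q _.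
  by case e_q: (e q); rewrite ?mul0r //= inflow_term //; apply: other_particle.
rewrite big_split sumrN big_split /= (sum_headway_sym D e (fun n => ratefun x rr n 0)).
rewrite addrK big_mkcond; congr (_ * _); apply: eq_bigr => q _.
by rewrite outflow_term; case: (e q); rewrite ?mul1r ?mul0r.
Qed.

Variables (N : nat) (e' : config L).
Hypothesis e'N : e' \in Omega L N.

Let npart_e' : npart e' = N.
Proof. by have := e'N; rewrite inE => /eqP. Qed.

Let jump_in (u : 'I_L -> 'I_L) p : e' p -> ~~ e' (u p) -> jump u e' p \in Omega L N.
Proof. by move=> e_p e_up; rewrite inE npart_jump // npart_e'. Qed.

Lemma jump_rate_out :
  \sum_(e in Omega L N) jump_rate s t x rr e' e
  = \sum_p (e' p && ~~ e' (s p))%:R * ratefun x rr (headway s e' p) (headway t e' p).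
Proof.
rewrite /jump_rate exchange_big; apply: eq_bigr => p _.
by rewrite sum_indicator_eq // => /andP [e_p e_sp]; apply: jump_in.
Qed.

Lemma jump_rate_in :
  \sum_(e in Omega L N) x ^+ neighbours s e * jump_rate s t x rr e e'
  = \sum_q (e' q && ~~ e' (t q))%:R * (x ^+ neighbours s (jump t e' q)
     * ratefun x rr (headway s (jump t e' q) (t q)) (headway t (jump t e' q) (t q))).
Proof.
have [sK tK _ _ _] := D.
rewrite (eq_bigr (fun e => \sum_p ((e' (s p) && ~~ e' p) && (e == jump t e' (s p)))%:R
   * (x ^+ neighbours s e * ratefun x rr (headway s e p) (headway t e p)))) => [|e _].
  rewrite exchange_big (reindex_inj (can_inj tK)); apply: eq_bigr => q _ /=.
  by rewrite sum_indicator_eq tK // => /andP [e_q e_tq]; apply: jump_in.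
by rewrite /jump_rate mulr_sumr; apply: eq_bigr => p _; rewrite mulrCA (jump_equiv D).
Qed.

Lemma jump_rate_balance : (2 < L)%N -> (1 < N)%N ->
  \sum_(e in Omega L N) x ^+ neighbours s e * jump_rate s t x rr e e'
  = x ^+ neighbours s e' * \sum_(e in Omega L N) jump_rate s t x rr e' e.
Proof.
move=> L_gt2 N_gt1; rewrite jump_rate_in jump_rate_out inflow_eq_outflow //.
by rewrite npart_e'.
Qed.

End Balance.

Lemma val_iter_ordS L m (p : 'I_L) : val (iter m (@ordS L) p) = ((p + m) %% L)%N.
Proof.
elim: m => [|m IHm] /=; first by rewrite addn0 modn_small.
by rewrite IHm -addn1 modnDml -addnA addn1.
Qed.

Lemma orientation_ordS L : orientation (@ordS L) (@ord_pred L).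
Proof.
split=> [||p|p m /andP [m_gt0 m_lt]|p j].
- exact: ordSK.
- exact: ord_predK.
- by apply: val_inj; rewrite val_iter_ordS modnDr modn_small.
- apply/eqP => /(congr1 (@nat_of_ord L)); rewrite val_iter_ordS; have p_lt := ltn_ord p.
  case: (ltnP (p + m) L) => [pm_lt|pm_ge]; first by rewrite modn_small //; lia.
  have -> : (p + m = (p + m - L) + L)%N by lia.
  by rewrite modnDr modn_small; lia.
- have p_lt := ltn_ord p; exists ((j + L - p) %% L)%N; first by rewrite ltn_mod; lia.
  apply: val_inj; rewrite val_iter_ordS modnDmr.
  have -> : (p + (j + L - p) = j + L)%N by lia.
  by rewrite modnDr modn_small.
Qed.

Lemma Qrate_split (R : nzRingType) L (x : R) (rr ll : nat -> R) (e e' : config L) :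
  Qrate L x rr ll e e' =
  jump_rate (@ordS L) (@ord_pred L) x rr e e'
  + jump_rate (@ord_pred L) (@ordS L) x ll e e'.
Proof. exact: big_split. Qed.

Lemma Qrate_balance (R : fieldType) L N (x : R) (rr ll : nat -> R) (e' : config L) :
  (2 < L)%N -> (1 < N)%N -> x != 0 -> e' \in Omega L N ->
  \sum_(e in Omega L N) x ^+ nn e * Qrate L x rr ll e e'
  = x ^+ nn e' * \sum_(e in Omega L N) Qrate L x rr ll e' e.
Proof.
move=> L_gt2 N_gt1 x_neq0 e'N.
have D := orientation_ordS L; have D' := orientation_sym D.
have nn_pred e : nn e = neighbours (@ord_pred L) e := neighbours_sym D' e.
under eq_bigr do rewrite Qrate_split mulrDr {2}nn_pred.
under [in RHS]eq_bigr do rewrite Qrate_split.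
rewrite big_split big_split mulrDr /= {2}nn_pred.
by rewrite (jump_rate_balance D) // (jump_rate_balance D').
Qed.

Theorem theorem1 (R : realFieldType) (L N : nat) (x : R) (rr ll : nat -> R) :
  (2 <= N)%N -> (N <= L - 1)%N -> 0 < x ->
  (forall k n : nat, (k + n <= L - N)%N ->
     0 <= ratefun x rr k n /\ 0 <= ratefun x ll k n) ->
  ep_invariant L N (pihat L N x) (Qrate L x rr ll).
Proof.
move=> N_ge2 N_le x_gt0 _ e' e'N; have L_gt2 : (2 < L)%N by lia.
rewrite /pihat; under eq_bigr do rewrite mulrAC.
by rewrite -mulr_suml [RHS]mulrAC Qrate_balance // gt_eqF.
Qed.
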